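(* Let $n\ge5$ be odd, $k=\frac{n-3}{2}$, and let $V$ be an $n$-element set with $V=\{v_1,\dots,v_{2k+1},s,t\}$. Define $a\colon V^+\times V^-\to\mathbb{Z}$ (where $V^\pm=\{v^\pm\colon v\in V\}$) by $a(u^+,u^-)=0$ for $u\in V$; $a(v_i^+,v_j^-)=\bigl|2k+1-2|i-j|\bigr|$ for $i\ne j$; $a(u^+,v^-)=k$ if exactly one of $u,v$ lies in $\{s,t\}$; and $a(s^+,t^-)=a(t^+,s^-)=1$. Let $\mu\in\mathbb{R}\setminus\{0\}$ and $\lambda\in\mathbb{R}^{V^+\cup V^-}$, and define $a^{\mu,\lambda}(u^+,v^-)=\mu\, a(u^+,v^-)+\lambda_{u^+}+\lambda_{v^-}$ for all $u,v\in V$. If all entries $a^{\mu,\lambda}(u^+,v^-)$ are integers, then (1) $\max_{u,v\in V}|a^{\mu,\lambda}(u^+,v^-)|\ge\frac{n-4}{2}$, and (2) the number of distinct values among $\{a^{\mu,\lambda}(u^+,v^-)\colon u,v\in V\}$ is at least $\sqrt{\frac{n-1}{2}}$.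
   Context: The function $a$ is the coefficient vector (indexed by the edges $\{u^+,v^-\}$ of the complete bipartite graph on $V^+\cup V^-$) of the canonical transformation of the constraint for the dominant of the odd cycle polytope of $K_n$ induced by the cycle $(v_1,\dots,v_{2k+1})$; the vectors $a^{\mu,\lambda}$ are exactly the coefficient vectors obtained from it by scaling with $\mu$ and adding linear combinations of the degree equations $y(\delta(w))=1$. *)

From HB Require Import structures.
From mathcomp Require Import all_boot all_order all_algebra.
Set Implicit Arguments. Unset Strict Implicit. Unset Printing Implicit Defensive.
Import Order.TTheory GRing.Theory Num.Theory.
Local Open Scope ring_scope.

(* Labelling of V = 'I_n (n = 2k+3):
   v_{i+1} is the ordinal i for i < 2k+1 = n-2,  s is n-2, t is n-1.
   a u v stands for a(u^+, v^-). *)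
Definition odd_cycle_a (n : nat) (u v : 'I_n) : int :=
  let m := (n - 2)%N in
  let k := ((n - 3) %/ 2)%N in
  if u == v then 0
  else if (u < m)%N && (v < m)%N then
    (`| m%:Z - 2 * `|u%:Z - v%:Z| | : int)
  else if (u < m)%N || (v < m)%N then k%:Z
  else 1.

Definition a_mu_lambda (R : rcfType) (n : nat) (mu : R)
  (lamp lamm : 'I_n -> R) (u v : 'I_n) : R :=
  mu * (odd_cycle_a u v)%:~R + lamp u + lamm v.

Definition amul_values (R : rcfType) (n : nat) (mu : R)
  (lamp lamm : 'I_n -> R) : seq R :=
  [seq a_mu_lambda mu lamp lamm uv.1 uv.2 | uv <- enum [set: 'I_n * 'I_n]].

From HB Require Import structures.
From mathcomp Require Import all_boot all_order all_algebra.
From mathcomp Require Import zify ring lra.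
Set Implicit Arguments. Unset Strict Implicit. Unset Printing Implicit Defensive.
Import Order.TTheory GRing.Theory Num.Theory.
Local Open Scope ring_scope.

(* The potentials lambda cancel in every alternating sum
   a(u,v) + a(u',v') - a(u,v') - a(u',v) around a 4-cycle of K_{V+,V-}, so
   such sums of a^{mu,lambda} are mu times those of a.  The 4-cycle through
   s, t and v_1 has alternating sum 1 for a, hence mu is a nonzero integer
   and |mu| >= 1.  The 4-cycle on v_1, v_2 has alternating sum 2(2k-1), so
   one of its four entries has absolute value at least (2k-1)/2 = (n-4)/2.
   Finally, a^{mu,lambda}(s+,v_j-) - a^{mu,lambda}(v_1+,v_j-) equals
   mu (k - a(v_1,v_j)) up to a constant, and a(v_1,v_j) takes the distinct
   values 0, 2k-1, 2k-3, ..., 1 for j = 1, ..., k+1; so these k+1 columns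
   give k+1 distinct pairs of values, and the number N of distinct values
   satisfies N^2 >= k+1 = (n-1)/2. *)

Definition cross_diff (I J : Type) (M : zmodType) (f : I -> J -> M)
    (u u' : I) (v v' : J) : M :=
  f u v + f u' v' - f u v' - f u' v.

Lemma norm_cross_diff_lt (R : realDomainType) (I J : Type) (f : I -> J -> R)
    (c : R) (u u' : I) (v v' : J) :
  (forall x y, `|f x y| < c) -> `|cross_diff f u u' v v'| < 4 * c.
Proof.
move=> lt_c; rewrite /cross_diff.
have [/ltr_normlP[? ?] /ltr_normlP[? ?]] := (lt_c u v, lt_c u' v').
have [/ltr_normlP[? ?] /ltr_normlP[? ?]] := (lt_c u v', lt_c u' v).
by apply/ltr_normlP; split; lra.
Qed.

Lemma norm_intr_ge1 (R : numDomainType) (z : int) :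
  z != 0 -> 1 <= `|z%:~R : R|.
Proof. by move=> z_neq0; rewrite -intr_norm ler1z; lia. Qed.

Lemma sqrt_nat_le (R : rcfType) (m N : nat) :
  (m <= N ^ 2)%N -> Num.sqrt (m%:R : R) <= N%:R.
Proof.
move=> le_mN; rewrite -[N%:R]ger0_norm // -sqrtr_sqr.
by rewrite ler_sqrt ?exprn_ge0 // -natrX ler_nat.
Qed.

Lemma size_uniq_pairs_le (T : eqType) (s : seq T) (p : seq (T * T)) :
  uniq p -> {subset p <= [seq (x, y) | x <- s, y <- s]} ->
  (size p <= size (undup s) ^ 2)%N.
Proof.
move=> uniq_p sub_p; rewrite expnS expn1 -(size_allpairs pair).
apply: uniq_leq_size uniq_p _ => xy /sub_p /allpairsP[[x y] [xs ys ->]].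
by apply: allpairs_f; rewrite mem_undup.
Qed.

Lemma odd_cycle_aii (n : nat) (u : 'I_n) : odd_cycle_a u u = 0.
Proof. by rewrite /odd_cycle_a eqxx. Qed.

Lemma odd_cycle_aC (n : nat) (u v : 'I_n) : odd_cycle_a u v = odd_cycle_a v u.
Proof. by rewrite /odd_cycle_a eq_sym andbC orbC (distrC (u : int)). Qed.

Section PerturbedCoefficients.

Variables (R : rcfType) (n : nat) (mu : R) (lamp lamm : 'I_n -> R).
Local Notation A := (a_mu_lambda mu lamp lamm).

Lemma cross_diff_a_mu_lambda u u' v v' :
  cross_diff A u u' v v' = mu * (cross_diff (@odd_cycle_a n) u u' v v')%:~R.
Proof. by rewrite /cross_diff /a_mu_lambda !intrD !intrN; ring. Qed.

Lemma a_mu_lambda_subl u u' v :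
  A u v - A u' v =
  mu * (odd_cycle_a u v - odd_cycle_a u' v)%:~R + (lamp u - lamp u').
Proof. by rewrite /a_mu_lambda intrD intrN; ring. Qed.

Lemma a_mu_lambda_in_values u v : A u v \in amul_values mu lamp lamm.
Proof. by apply/mapP; exists (u, v); rewrite ?mem_enum ?in_setT. Qed.

Lemma int_mu_of_unit_cross_diff u u' v v' :
  (forall x y, exists z : int, A x y = z%:~R) ->
  cross_diff (@odd_cycle_a n) u u' v v' = 1 -> exists z : int, mu = z%:~R.
Proof.
move=> A_int cross1.
have [[z1 e1] [z2 e2]] := (A_int u v, A_int u' v').
have [[z3 e3] [z4 e4]] := (A_int u v', A_int u' v).
exists (z1 + z2 - z3 - z4).
have := cross_diff_a_mu_lambda u u' v v'; rewrite cross1 mulr1 => <-.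
by rewrite /cross_diff e1 e2 e3 e4 !intrD !intrN.
Qed.

End PerturbedCoefficients.

Section OddCycle.

Variable k : nat.
Local Notation n := k.*2.+3.
Local Notation m := k.*2.+1.
Local Notation v i := (inord i : 'I_n).
Local Notation s := (v m).
Local Notation t := (v m.+1).

Lemma odd_cycle_a_inord i j : (i < n)%N -> (j < n)%N ->
  odd_cycle_a (v i) (v j) =
  if i == j then 0
  else if (i < m)%N && (j < m)%N then `|m%:Z - 2 * `|i%:Z - j%:Z| |
  else if (i < m)%N || (j < m)%N then k%:Z else 1.
Proof.
move=> lt_in lt_jn; rewrite /odd_cycle_a -val_eqE /= !inordK //.
have -> : (n - 2 = m)%N by lia.
by have -> : ((n - 3) %/ 2 = k)%N by lia.
Qed.

Lemma odd_cycle_a_st : odd_cycle_a s t = 1.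
Proof. by rewrite odd_cycle_a_inord //; (repeat case: ifP); lia. Qed.

Lemma odd_cycle_a_cycle_st i j : (i < m)%N -> (m <= j < n)%N ->
  odd_cycle_a (v i) (v j) = k.
Proof. by move=> *; rewrite odd_cycle_a_inord; try lia; (repeat case: ifP); lia. Qed.

Lemma odd_cycle_a_v0 j : (0 < j <= k)%N ->
  odd_cycle_a (v 0) (v j) = m%:Z - 2 * j%:Z.
Proof. by move=> *; rewrite odd_cycle_a_inord; try lia; (repeat case: ifP); lia. Qed.

Lemma odd_cycle_a_v0_inj :
  {in iota 0 k.+1 &, injective (fun j => odd_cycle_a (v 0) (v j))}.
Proof.
move=> i j; rewrite !mem_iota !add0n => lt_ik lt_jk.
have aE l : (l < k.+1)%N ->
    odd_cycle_a (v 0) (v l) = if l == 0%N then 0 else m%:Z - 2 * l%:Z.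
  move=> lt_lk; case: eqP => [->|/eqP l_neq0]; first exact: odd_cycle_aii.
  by rewrite odd_cycle_a_v0 //; lia.
by rewrite /= !aE //; (repeat case: eqP); lia.
Qed.

Lemma cross_diff_odd_cycle_a_st : cross_diff (@odd_cycle_a n) s (v 0) t s = 1.
Proof.
rewrite /cross_diff odd_cycle_a_st odd_cycle_aii.
by rewrite !odd_cycle_a_cycle_st //; try lia; rewrite addrK subr0.
Qed.

Lemma cross_diff_odd_cycle_a_v01 : (0 < k)%N ->
  cross_diff (@odd_cycle_a n) (v 0) (v 1) (v 1) (v 0) = 4 * k%:Z - 2.
Proof.
move=> k_gt0; rewrite /cross_diff !odd_cycle_aii (odd_cycle_aC (v 1)).
by rewrite odd_cycle_a_v0 //; lia.
Qed.

Variables (R : rcfType) (mu : R) (lamp lamm : 'I_n -> R).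
Local Notation A := (a_mu_lambda mu lamp lamm).

Lemma exists_large_a_mu_lambda : (0 < k)%N ->
  (exists z : int, mu = z%:~R) -> mu != 0 ->
  exists u w, (2 * k%:R - 1) / 2 <= `|A u w|.
Proof.
move=> k_gt0 [z mu_z] mu_neq0.
set c := (2 * k%:R - 1) / 2.
have [/existsP[u /existsP[w le_c]]|none] :=
  boolP [exists u, exists w, c <= `|A u w|]; first by exists u, w.
have lt_c x y : `|A x y| < c.
  rewrite ltNge; apply: contraNN none => le_c.
  by apply/existsP; exists x; apply/existsP; exists y.
exfalso; have := norm_cross_diff_lt (v 0) (v 1) (v 1) (v 0) lt_c.
rewrite cross_diff_a_mu_lambda cross_diff_odd_cycle_a_v01 // normrM.
have mu_ge1 : 1 <= `|mu|.
  by rewrite mu_z norm_intr_ge1 //; apply: contraNneq mu_neq0 => z0; rewrite mu_z z0.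
have k_ge1 : 1 <= k%:R :> R by rewrite ler1n.
have -> : (4 * k%:Z - 2)%:~R = 4 * k%:R - 2 :> R by rewrite intrB intrM.
by rewrite (@ger0_norm _ (4 * k%:R - 2)) /c; [nra | lra].
Qed.

Lemma size_values_sqr_ge : mu != 0 ->
  (k.+1 <= size (undup (amul_values mu lamp lamm)) ^ 2)%N.
Proof.
move=> mu_neq0.
pose col j := (A s (v j), A (v 0) (v j)).
have col_diff j : (j < k.+1)%N ->
    A s (v j) - A (v 0) (v j) =
    mu * (k%:Z - odd_cycle_a (v 0) (v j))%:~R + (lamp s - lamp (v 0)).
  by move=> lt_jk; rewrite a_mu_lambda_subl odd_cycle_aC odd_cycle_a_cycle_st //; lia.
have uniq_cols : uniq (map col (iota 0 k.+1)).
  rewrite map_inj_in_uniq ?iota_uniq // => i j iI jI [ei ej].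
  apply: odd_cycle_a_v0_inj => //=; move: iI jI; rewrite !mem_iota !add0n => lt_ik lt_jk.
  have := col_diff i lt_ik; rewrite ei ej col_diff //.
  by move=> /addIr /(mulfI mu_neq0) /intr_inj /addrI /oppr_inj.
rewrite -[k.+1](size_iota 0) -(size_map col).
apply: size_uniq_pairs_le uniq_cols _ => _ /mapP[j _ ->].
by apply: allpairs_f; apply: a_mu_lambda_in_values.
Qed.

End OddCycle.

Theorem lemma14 (R : rcfType) (n : nat) (mu : R) (lamp lamm : 'I_n -> R) :
  odd n -> (5 <= n)%N -> mu != 0 ->
  (forall u v : 'I_n, exists z : int, a_mu_lambda mu lamp lamm u v = z%:~R) ->
  (exists u v : 'I_n, (n%:R - 4) / 2 <= `|a_mu_lambda mu lamp lamm u v|)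
  /\ Num.sqrt ((n%:R - 1) / 2 : R) <= (size (undup (amul_values mu lamp lamm)))%:R :> R.
Proof.
move=> odd_n n_ge5 mu_neq0 A_int.
have [k n_eq] : exists k, n = k.*2.+3.
  by exists (n./2 - 1)%N; have := odd_double_half n; rewrite odd_n; lia.
subst n; have k_gt0 : (0 < k)%N by lia.
have nE : (k.*2.+3)%:R = 2 * k%:R + 3 :> R.
  by rewrite -addn3 natrD -muln2 natrM; ring.
have mu_int := int_mu_of_unit_cross_diff A_int (cross_diff_odd_cycle_a_st k).
split.
  have [u [w le_uw]] := exists_large_a_mu_lambda lamp lamm k_gt0 mu_int mu_neq0.
  exists u, w; rewrite nE.
  by have -> : 2 * k%:R + 3 - 4 = 2 * k%:R - 1 :> R by ring.
have -> : ((k.*2.+3)%:R - 1) / 2 = (k.+1)%:R :> R by rewrite nE -[(k.+1)%:R]natr1; lra.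
exact/sqrt_nat_le/(size_values_sqr_ge lamp lamm).
Qed.
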